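(* Let $\sigma\in\mathfrak S_k$ and $\tau\in\mathfrak S_{l}$ be consecutive patterns ($k,l\ge1$) with $A_\sigma(z)=A_\tau(z)$. Then $A_{12\text{-}\sigma}(z)=A_{12\text{-}\tau}(z)$, where for a consecutive pattern $\sigma=\sigma_1\cdots\sigma_k$, $12\text{-}\sigma$ denotes the generalized pattern $12\text{-}(\sigma_1+2)(\sigma_2+2)\cdots(\sigma_k+2)$.
   Context: $\mathfrak S_n$ is the symmetric group on $\{1,\dots,n\}$, permutations in one-line notation. A generalized pattern of length $m$ is a permutation $\sigma_1\cdots\sigma_m\in\mathfrak S_m$ with, between each pair of adjacent entries, either a dash ''-'' or nothing. A permutation $\pi\in\mathfrak S_n$ contains it if there are indices $i_1<\dots<i_m$ with $i_{j+1}=i_j+1$ whenever there is no dash between $\sigma_j$ and $\sigma_{j+1}$, and with $\pi_{i_a}<\pi_{i_b}$ iff $\sigma_a<\sigma_b$ for all $a,b$; otherwise $\pi$ avoids it. A consecutive pattern has no dashes. $\alpha_n(\sigma)$ is the number of permutations in $\mathfrak S_n$ avoiding $\sigma$ ($\alpha_0=1$) and $A_\sigma(z)=\sum_{n\ge0}\alpha_n(\sigma)z^n/n!$. *)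

From mathcomp Require Import all_boot all_order all_fingroup all_algebra.
Set Implicit Arguments. Unset Strict Implicit. Unset Printing Implicit Defensive.
Import GRing.Theory.
Local Open Scope ring_scope.

(* One-line notation of pi : 'S_n, with values in {0,...,n-1}
   (order-isomorphic to the paper's {1,...,n} convention). *)
Definition oneline n (pi : 'S_n) : seq nat := [seq val (pi i) | i <- enum 'I_n].

(* A generalized pattern is given by its one-line word [w] (of length m)
   and a dash predicate [dash]: [dash j] (j < m-1, 0-indexed) holds iff
   there is a dash between the entries w_j and w_{j+1}.
   [gcontains w dash pi]: there are indices i_0 < ... < i_{m-1} in pi
   with i_{j+1} = i_j + 1 whenever there is no dash between w_j, w_{j+1},
   and pi_{i_a} < pi_{i_b} iff w_a < w_b. *)
Definition gcontains (w : seq nat) (dash : nat -> bool) n (pi : 'S_n) : bool :=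
  [exists f : {ffun 'I_(size w) -> 'I_n},
    [forall a : 'I_(size w), forall b : 'I_(size w),
      [&& ((a < b)%N ==> (f a < f b)%N),
          (((a.+1 == b)%N && ~~ dash (val a)) ==> (val (f b) == (val (f a)).+1)) &
          ((pi (f a) < pi (f b))%N == (nth 0%N w a < nth 0%N w b)%N)]]].

Definition alpha (w : seq nat) (dash : nat -> bool) (n : nat) : nat :=
  #|[set pi : 'S_n | ~~ gcontains w dash pi]|.

(* Coefficient sequence of the exponential generating function
   A(z) = sum_n alpha_n z^n / n!; two formal power series are equal iff
   their coefficient functions are equal. *)
Definition egf (w : seq nat) (dash : nat -> bool) : nat -> rat :=
  fun n => (alpha w dash n)%:R / (n`!)%:R.

Definition consec_dash : nat -> bool := fun _ => false.

(* 12-sigma = 12-(sigma_1+2)...(sigma_k+2): one dash, between positions 1 and 2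
   (0-indexed), i.e. between the "2" and the first entry of the shifted sigma. *)
Definition twelve_word k (s : 'S_k) : seq nat := [:: 0%N, 1%N & map (addn 2) (oneline s)].
Definition twelve_dash : nat -> bool := fun j => j == 1%N.

From mathcomp Require Import all_boot all_order all_fingroup all_algebra.
From mathcomp Require Import zify.
From Stdlib Require Import FunctionalExtensionality.
Set Implicit Arguments. Unset Strict Implicit. Unset Printing Implicit Defensive.
Import GRing.Theory Num.Theory.

(* Call a position x of pi marked if some ascent pi_i < pi_{i+1} with i+1 < x
   has pi_{i+1} < pi_x. An occurrence of 12-sigma is exactly a consecutive
   occurrence of sigma made of marked positions, so pi avoids 12-sigma iff the
   restriction of pi to every maximal run of marked positions avoids sigma
   consecutively. Rearranging the values of pi inside one run does not change
   which positions are marked. Hence, acting with the permutations of one run,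
   the permutations whose run restrictions all avoid sigma can be traded run
   by run, from left to right, for those whose restrictions avoid tau: on each
   orbit the two counts are alpha_L(sigma) and alpha_L(tau), L the run length. *)

Definition pval n (pi : 'S_n) (x : nat) : nat := nth 0 (oneline pi) x.

Lemma size_oneline n (pi : 'S_n) : size (oneline pi) = n.
Proof. by rewrite /oneline size_map size_enum_ord. Qed.

Lemma pvalE n (pi : 'S_n) (x : 'I_n) : pval pi x = pi x.
Proof. by rewrite /pval /oneline (nth_map x) ?size_enum_ord ?nth_ord_enum. Qed.

Lemma pval_out n (pi : 'S_n) x : n <= x -> pval pi x = 0.
Proof. by move=> h; rewrite /pval nth_default ?size_oneline. Qed.

Definition occurrence (w : seq nat) (dash : nat -> bool) n (pi : 'S_n) (g : nat -> nat) :=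
  [/\ forall a, a < size w -> g a < n,
      forall a b, b < size w -> a < b -> g a < g b,
      forall a, a.+1 < size w -> ~~ dash a -> g a.+1 = (g a).+1 &
      forall a b, a < size w -> b < size w ->
        (pval pi (g a) < pval pi (g b)) = (nth 0 w a < nth 0 w b)].

Lemma gcontainsP w dash n (pi : 'S_n) :
  reflect (exists g, occurrence w dash pi g) (gcontains w dash pi).
Proof.
apply: (iffP existsP).
- move=> [f /forallP H].
  pose g x := if insub x is Some a then val (f a) else 0.
  have gE (a : 'I_(size w)) : g a = f a by rewrite /g valK.
  exists g; split.
  + by move=> a ha; rewrite (gE (Ordinal ha)).
  + move=> a b hb hab; have ha : a < size w by apply: ltn_trans hb.
    have := forallP (H (Ordinal ha)) (Ordinal hb).
    by case/and3P => /= /implyP /(_ hab) h _ _; rewrite (gE (Ordinal ha)) (gE (Ordinal hb)).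
  + move=> a hb hd; have ha : a < size w by apply: ltnW.
    have := forallP (H (Ordinal ha)) (Ordinal hb).
    case/and3P => _ /= /implyP h _; rewrite (gE (Ordinal ha)) (gE (Ordinal hb)).
    by apply/eqP; apply: h; rewrite eqxx hd.
  + move=> a b ha hb; have := forallP (H (Ordinal ha)) (Ordinal hb).
    case/and3P => _ _ /eqP /= <-.
    by rewrite (gE (Ordinal ha)) (gE (Ordinal hb)) !pvalE.
- move=> [g [g_lt g_incr g_adj g_iso]].
  exists [ffun a : 'I_(size w) => Ordinal (g_lt a (ltn_ord a))].
  apply/forallP => a; apply/forallP => b; rewrite !ffunE /=.
  apply/and3P; split.
  + by apply/implyP => h; apply: g_incr.
  + by apply/implyP => /andP[/eqP hab hd]; rewrite -hab g_adj // hab.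
  + have := g_iso a b (ltn_ord a) (ltn_ord b).
    by rewrite (pvalE pi (Ordinal (g_lt a _))) (pvalE pi (Ordinal (g_lt b _))) => ->.
Qed.

Definition marked (p : nat -> nat) (x : nat) : bool :=
  has (fun i => (i.+1 < x) && (p i < p i.+1) && (p i.+1 < p x)) (iota 0 x).

Lemma markedP p x :
  reflect (exists i, [/\ i.+1 < x, p i < p i.+1 & p i.+1 < p x]) (marked p x).
Proof.
apply: (iffP hasP).
- by move=> [i _ /andP[/andP[h1 h2] h3]]; exists i.
- move=> [i [h1 h2 h3]]; exists i; last by rewrite h1 h2 h3.
  by rewrite mem_iota /=; lia.
Qed.

Lemma exists_argmin_interval (p : nat -> nat) a b : a < b ->
  exists2 y, a <= y < b & forall z, a <= z < b -> p y <= p z.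
Proof.
move=> hab; have [d ->] : exists d, b = a + d.+1 by exists (b - a).-1; lia.
elim: d => [|d [y hy hmin]].
  by exists a; [lia | move=> z hz; have -> : z = a by lia].
case: (leqP (p y) (p (a + d.+1))) => h.
- exists y; first by lia.
  move=> z hz; case: (ltnP z (a + d.+1)) => hz'; first by apply: hmin; lia.
  by have -> : z = a + d.+1 by lia.
- exists (a + d.+1); first by lia.
  move=> z hz; case: (ltnP z (a + d.+1)) => hz'.
    by apply: leq_trans (ltnW h) (hmin z _); lia.
  by have -> : z = a + d.+1 by lia.
Qed.

(* The ascent marking the minimum of an interval of marked positions lies
   before the interval and marks all of it. *)
Lemma ascent_before_marked p a b : a < b -> (forall y, a <= y < b -> marked p y) ->
  exists i, [/\ i.+1 < a, p i < p i.+1 & forall y, a <= y < b -> p i.+1 < p y].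
Proof.
move=> hab hm; have [y0 hy0 hmin] := exists_argmin_interval p hab.
have /markedP [i [h1 h2 h3]] := hm y0 hy0.
case: (ltnP i.+1 a) => hia.
- by exists i; split => // y hy; apply: leq_trans h3 (hmin y hy).
- have : p y0 <= p i.+1 by apply: hmin; lia.
  by rewrite leqNgt h3.
Qed.

(* A marking ascent of p' that meets [a, b), or marks a position in it, can be
   replaced by the ascent of p below [a, b); the one exception, an ascent from
   b - 1 to b, would make b marked in p. *)
Lemma marked_rearrange_sub p p' a b :
  (forall x, ~~ (a <= x < b) -> p' x = p x) ->
  (forall x, a <= x < b -> exists2 y, a <= y < b & p' x = p y) ->
  (exists i, [/\ i.+1 < a, p i < p i.+1 & forall y, a <= y < b -> p i.+1 < p y]) ->
  ~~ marked p b -> forall x, marked p' x -> marked p x.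
Proof.
move=> eq_out values_in [i0 [h0 h0' h0'']] hb x /markedP [i [hi1 hi2 hi3]]; apply/markedP.
case: (boolP (a <= x < b)) => hx.
  by exists i0; split => //; [lia | exact: h0''].
rewrite (eq_out _ hx) in hi3.
case: (boolP (a <= i.+1 < b)) => hi.
  have [y hy ey] := values_in _ hi; exists i0; split => //; first by lia.
  by apply: ltn_trans (h0'' y hy) _; rewrite -ey.
rewrite (eq_out _ hi) in hi2 hi3.
case: (boolP (a <= i < b)) => hii; last first.
  by exists i; split => //; rewrite -(eq_out _ hii).
have eb : i.+1 = b by lia.
have [y hy ey] := values_in _ hii.
case/negP: hb; apply/markedP; exists i0; split => //; first by lia.
by rewrite -eb; apply: ltn_trans (h0'' y hy) _; rewrite -ey.
Qed.

Lemma marked_rearrange p p' a b :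
  (forall x, ~~ (a <= x < b) -> p' x = p x) ->
  (forall x, a <= x < b -> exists2 y, a <= y < b & p' x = p y) ->
  (forall y, a <= y < b -> exists2 x, a <= x < b & p y = p' x) ->
  a < b -> (forall y, a <= y < b -> marked p y) ->
  ~~ marked p b -> marked p' =1 marked p.
Proof.
move=> eq_out values_in values_out hab hm hb.
have [i0 [h1 h2 h3]] := ascent_before_marked hab hm.
have sub := marked_rearrange_sub eq_out values_in (ex_intro _ i0 (And3 h1 h2 h3)) hb.
have hb' : ~~ marked p' b by apply/negP => /sub; rewrite (negbTE hb).
have e0 : p' i0 = p i0 by apply: eq_out; lia.
have e1 : p' i0.+1 = p i0.+1 by apply: eq_out; lia.
have asc' : exists i, [/\ i.+1 < a, p' i < p' i.+1 & forall y, a <= y < b -> p' i.+1 < p' y].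
  exists i0; split => //; first by rewrite e0 e1.
  by move=> y hy; have [z hz ->] := values_in _ hy; rewrite e1; apply: h3.
have sub' := marked_rearrange_sub (p := p') (p' := p)
  (fun x hx => esym (eq_out _ hx)) values_out asc' hb'.
by move=> x; apply/idP/idP; [apply: sub | apply: sub'].
Qed.

Fixpoint run_start (m : nat -> bool) (e : nat) : nat :=
  if e is e'.+1 then (if m e' then run_start m e' else e) else 0.

Lemma run_start_le (m : nat -> bool) e : run_start m e <= e.
Proof. elim: e => //= e IH; case: (m e) => //; exact: leqW. Qed.

Lemma run_startP (m : nat -> bool) e x : run_start m e <= x < e -> m x.
Proof.
elim: e => [|e IH] /=; first by lia.
case he: (m e) => h; last by lia.
case: (ltnP x e) => hx; first by apply: IH; lia.
by have -> : x = e by lia.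
Qed.

Lemma run_start_min (m : nat -> bool) e x :
  x <= e -> (forall y, x <= y < e -> m y) -> run_start m e <= x.
Proof.
elim: e => [|e IH] /= hx hm; first by lia.
case: (ltnP x e.+1) => hx'; last by case: (m e) => //; have := run_start_le m e; lia.
rewrite hm; last by lia.
by apply: IH; [lia | move=> y hy; apply: hm; lia].
Qed.

Lemma eq_run_start (m1 m2 : nat -> bool) e : m1 =1 m2 -> run_start m1 e = run_start m2 e.
Proof. by move=> h; elim: e => //= e ->; rewrite h. Qed.

Definition window_iso (p : nat -> nat) (j : nat) (r : nat -> nat) (k : nat) : bool :=
  [forall a : 'I_k, forall b : 'I_k, (p (j + a) < p (j + b)) == (r a < r b)].

Lemma consec_containsE k L (rho : 'S_k) (q : 'S_L) : 0 < k ->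
  gcontains (oneline rho) consec_dash q =
  [exists j : 'I_L, (j + k <= L) && window_iso (pval q) j (pval rho) k].
Proof.
move=> hk; apply/gcontainsP/existsP.
- move=> [g [g_lt _ g_adj g_iso]]; rewrite size_oneline in g_lt g_adj g_iso.
  have gE u : u < k -> g u = g 0 + u.
    elim: u => [|u IH] hu; first by rewrite addn0.
    by rewrite g_adj // IH ?addnS //; apply: ltnW.
  exists (Ordinal (g_lt 0 hk)); apply/andP; split => /=.
    have hk1 : k.-1 < k by rewrite ltn_predL.
    by have := g_lt k.-1 hk1; rewrite gE //; lia.
  apply/forallP => a; apply/forallP => b; apply/eqP.
  by rewrite -!gE //; apply: g_iso.
- move=> [j /andP[hj hiso]]; exists (fun a => j + a); split; rewrite ?size_oneline.
  + by move=> a ha; lia.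
  + by move=> a b _ hab; lia.
  + by move=> a _ _; rewrite addnS.
  + move=> a b ha hb.
    by have := eqP (forallP (forallP hiso (Ordinal ha)) (Ordinal hb)).
Qed.

Lemma size_twelve_word k (rho : 'S_k) : size (twelve_word rho) = k.+2.
Proof. by rewrite /= size_map size_oneline. Qed.

Lemma nth_twelve_word k (rho : 'S_k) u : u < k ->
  nth 0 (twelve_word rho) u.+2 = 2 + pval rho u.
Proof. by move=> hu; rewrite /= (nth_map 0) ?size_oneline. Qed.

Definition marked_window_iso n (pi : 'S_n) (j : nat) k (rho : 'S_k) : bool :=
  [&& j + k <= n, [forall u : 'I_k, marked (pval pi) (j + u)] &
      window_iso (pval pi) j (pval rho) k].

Lemma twelve_occurrence_window n k (rho : 'S_k) (pi : 'S_n) g : 0 < k ->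
  occurrence (twelve_word rho) twelve_dash pi g -> marked_window_iso pi (g 2) rho.
Proof.
move=> hk [g_lt g_incr g_adj g_iso]; rewrite size_twelve_word in g_lt g_incr g_adj g_iso.
have g1 : g 1 = (g 0).+1 by apply: g_adj.
have gE u : u < k -> g u.+2 = g 2 + u.
  elim: u => [|u IH] hu; first by rewrite addn0.
  by rewrite g_adj // IH ?addnS //; apply: ltnW.
have asc : pval pi (g 0) < pval pi (g 1) by rewrite g_iso.
have above u : u < k -> pval pi (g 1) < pval pi (g 2 + u).
  by move=> hu; rewrite -gE // g_iso // nth_twelve_word.
apply/and3P; split.
- have hk1 : k.-1 < k by rewrite ltn_predL.
  by have := g_lt k.-1.+2; rewrite gE //; move/(_ hk1); lia.
- apply/forallP => u; apply/markedP; exists (g 0); split; rewrite -?g1 //.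
  + have h2 : 2 < k.+2 by rewrite !ltnS.
    by have := g_incr 1 2 h2 isT; rewrite g1; lia.
  + exact: above.
- apply/forallP => a; apply/forallP => b; apply/eqP.
  rewrite -!gE // g_iso ?ltnS //.
  by rewrite (nth_twelve_word rho (ltn_ord a)) (nth_twelve_word rho (ltn_ord b)) ltn_add2l.
Qed.

Lemma window_twelve_occurrence n k (rho : 'S_k) (pi : 'S_n) (j : nat) : 0 < k ->
  marked_window_iso pi j rho -> exists g, occurrence (twelve_word rho) twelve_dash pi g.
Proof.
move=> hk /and3P[hjk hm hiso].
have hm' y : j <= y < j + k -> marked (pval pi) y.
  move=> hy; have hu : y - j < k by lia.
  by have := forallP hm (Ordinal hu); rewrite /= subnKC //; case/andP: hy.
have hjk2 : j < j + k by rewrite -addn1 leq_add2l.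
have [i [hi1 hp1 hp2]] := ascent_before_marked hjk2 hm'.
have hp2' u : u < k -> pval pi i.+1 < pval pi (j + u) by move=> hu; apply: hp2; lia.
have hp3 u : u < k -> pval pi i < pval pi (j + u).
  by move=> hu; apply: ltn_trans hp1 (hp2' u hu).
have hn u : u < k -> nth 0 [seq 2 + i | i <- oneline rho] u = 2 + pval rho u.
  by move=> hu; rewrite (nth_map 0) ?size_oneline.
exists (fun x => match x with 0 => i | 1 => i.+1 | x'.+2 => j + x' end).
split; rewrite ?size_twelve_word.
- by case=> [|[|a]] ha; lia.
- by case=> [|[|a]] [|[|b]] hb hab //=; lia.
- by case=> [|[|a]] //= ha _; rewrite addnS.
- case=> [|[|a]] [|[|b]] ha hb /=.
  + by rewrite ltnn.
  + by rewrite hp1.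
  + by rewrite hn // hp3.
  + by rewrite ltnNge ltnW.
  + by rewrite ltnn.
  + by rewrite hn // hp2'.
  + by rewrite hn // ltnNge ltnW // hp3.
  + by rewrite hn // ltnNge ltnW // hp2'.
  + have ha' : a < k by lia.
    have hb' : b < k by lia.
    rewrite !hn // ltn_add2l.
    by have := eqP (forallP (forallP hiso (Ordinal ha')) (Ordinal hb')).
Qed.

Lemma twelve_containsE n k (rho : 'S_k) (pi : 'S_n) : 0 < k ->
  gcontains (twelve_word rho) twelve_dash pi =
  [exists j : 'I_n, marked_window_iso pi j rho].
Proof.
move=> hk; apply/gcontainsP/existsP => [[g occ] | [j /(window_twelve_occurrence hk)] //].
have /and3P[hj _ _] := twelve_occurrence_window hk occ.
have hjn : g 2 < n by lia.
exists (Ordinal hjn).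
exact: twelve_occurrence_window hk occ.
Qed.

Definition marked_pos n (pi : 'S_n) : nat -> bool := marked (pval pi).

Definition run_end n (pi : 'S_n) (e : nat) : bool :=
  marked_pos pi e && ~~ marked_pos pi e.+1.

Definition window_avoids n (pi : 'S_n) (a b : nat) k (rho : 'S_k) : bool :=
  [forall j : 'I_n, (a <= j) && (j + k <= b) ==> ~~ window_iso (pval pi) j (pval rho) k].

Definition run_avoids n (pi : 'S_n) (e : nat) k (rho : 'S_k) : bool :=
  window_avoids pi (run_start (marked_pos pi) e.+1) e.+1 rho.

Lemma marked_pos_out n (pi : 'S_n) x : n <= x -> ~~ marked_pos pi x.
Proof.
by move=> h; apply/negP => /markedP [i [_ _]]; rewrite (pval_out pi h).
Qed.

Lemma marked_pos_lt n (pi : 'S_n) x : marked_pos pi x -> x < n.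
Proof. by rewrite ltnNge; apply: contraTN => /(marked_pos_out pi). Qed.

Lemma run_end_lt n (pi : 'S_n) e : run_end pi e -> e < n.
Proof. by case/andP => /marked_pos_lt. Qed.

Lemma run_start_le_end n (pi : 'S_n) e : run_end pi e -> run_start (marked_pos pi) e.+1 <= e.
Proof. by case/andP => h _; rewrite /= h run_start_le. Qed.

Lemma marked_window_in_run n (pi : 'S_n) j k : 0 < k -> j + k <= n ->
  (forall u, u < k -> marked_pos pi (j + u)) ->
  exists2 e : 'I_n, run_end pi e &
    (run_start (marked_pos pi) e.+1 <= j) && (j + k <= e.+1).
Proof.
move=> hk hjk hm.
have exP : exists u, ~~ marked_pos pi u && (j + k <= u).
  by exists n; rewrite hjk marked_pos_out.
case: (ex_minnP exP) => u0 /andP[hu1 hu2] hmin.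
have run y : j <= y < u0 -> marked_pos pi y.
  move=> hy; case: (ltnP y (j + k)) => hyk.
    by have := hm (y - j); rewrite subnKC //; [apply; lia | lia].
  apply/negPn/negP => hny.
  by have := hmin y; rewrite hny hyk => /(_ isT); lia.
have hu0n : u0 <= n by apply: hmin; rewrite hjk marked_pos_out.
have he : u0.-1 < n by lia.
have hpu : u0.-1.+1 = u0 by lia.
exists (Ordinal he); rewrite /run_end hpu.
  by rewrite hu1 run //=; lia.
by rewrite hu2 andbT; apply: run_start_min; [lia | move=> y hy; apply: run; lia].
Qed.

Lemma avoid_twelveE n k (rho : 'S_k) (pi : 'S_n) : 0 < k ->
  ~~ gcontains (twelve_word rho) twelve_dash pi =
  [forall e : 'I_n, run_end pi e ==> run_avoids pi e rho].
Proof.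
move=> hk; rewrite twelve_containsE //; apply/idP/idP.
- move=> hno; apply/forallP => e; apply/implyP => /andP[he _].
  apply/forallP => j; apply/implyP => /andP[hj1 hj2]; apply/negP => hiso.
  case/negP: hno; apply/existsP; exists j; apply/and3P; split => //.
  + by have := ltn_ord e; lia.
  + apply/forallP => u; apply: (@run_startP (marked_pos pi) e.+1).
    by have := ltn_ord u; lia.
- move=> /forallP runs; apply/negP => /existsP [j /and3P[hjk /forallP hm hiso]].
  have [e he /andP[hj1 hj2]] := marked_window_in_run hk hjk (fun u hu => hm (Ordinal hu)).
  have /implyP/(_ he)/forallP/(_ j) := runs e.
  by rewrite hj1 hj2 hiso.
Qed.

Section Rank.
Variables (T : finType) (f : T -> nat).

Definition rank_in (A : {set T}) (y : nat) : nat := #|[set z in A | f z < y]|.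

Lemma rank_in_le (A : {set T}) y1 y2 : y1 <= y2 -> rank_in A y1 <= rank_in A y2.
Proof.
move=> h; apply: subset_leq_card; apply/subsetP => z; rewrite !inE.
by case/andP => -> /= hz; apply: leq_trans h.
Qed.

Lemma rank_in_lt (A : {set T}) z y : z \in A -> f z < y -> rank_in A (f z) < rank_in A y.
Proof.
move=> hz h; apply: proper_card; apply/properP; split.
  by apply/subsetP => x; rewrite !inE => /andP[-> /= hx]; apply: ltn_trans h.
by exists z; rewrite !inE ?hz ?h ?ltnn.
Qed.

Lemma rank_in_mono (A : {set T}) z1 z2 : z1 \in A ->
  (rank_in A (f z1) < rank_in A (f z2)) = (f z1 < f z2).
Proof.
move=> h1; case: (ltnP (f z1) (f z2)) => h; first by rewrite rank_in_lt.
by apply/negbTE; rewrite -leqNgt rank_in_le.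
Qed.

Lemma rank_in_inj (A : {set T}) : {in A &, injective f} -> {in A &, injective (rank_in A \o f)}.
Proof.
move=> finj z1 z2 h1 h2 /= e; apply: (finj z1 z2 h1 h2); apply/eqP.
by rewrite eqn_leq leqNgt [f z2 <= _]leqNgt -(rank_in_mono z1 h2) -(rank_in_mono z2 h1) e ltnn.
Qed.

Lemma rank_in_lt_card (A : {set T}) z : z \in A -> rank_in A (f z) < #|A|.
Proof.
move=> hz; apply: proper_card; apply/properP; split.
  by apply/subsetP => y; rewrite inE; case/andP.
by exists z; rewrite // inE hz ltnn.
Qed.

End Rank.

Lemma rank_in_imset (T T' : finType) (h : T -> T') (f : T' -> nat) (A : {set T}) y :
  injective h -> rank_in f (h @: A) y = rank_in (f \o h) A y.
Proof.
move=> hinj; rewrite /rank_in -(card_imset _ hinj); apply: eq_card => x.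
rewrite !inE; apply/andP/imsetP.
- by move=> [/imsetP [z hz ->] hf]; exists z; rewrite // inE hz.
- by move=> [z]; rewrite inE => /andP[hz hf] ->; rewrite imset_f.
Qed.

Section Standardization.
Variables (n a L : nat).
Hypothesis haL : a + L <= n.

Definition window : {set 'I_n} := [set x : 'I_n | a <= x < a + L].

Lemma shift_subproof (t : 'I_L) : a + t < n.
Proof. by have := ltn_ord t; lia. Qed.

Definition shift (t : 'I_L) : 'I_n := Ordinal (shift_subproof t).

Lemma shift_inj : injective shift.
Proof. by move=> t1 t2 /(congr1 val) /= /addnI /val_inj. Qed.

Lemma imset_shift : shift @: setT = window.
Proof.
apply/setP => x; rewrite inE; apply/imsetP/idP => [[t _ ->] | hx] /=.
  by have := ltn_ord t; lia.
have ht : x - a < L by lia.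
by exists (Ordinal ht); rewrite ?inE //; apply: val_inj => /=; lia.
Qed.

Lemma card_window : #|window| = L.
Proof. by rewrite -imset_shift card_imset ?cardsT ?card_ord //; apply: shift_inj. Qed.

Definition std_rank (rho : 'S_n) (t : 'I_L) : nat :=
  rank_in (fun u => val (rho (shift u))) setT (rho (shift t)).

Lemma std_rank_lt rho t : std_rank rho t < L.
Proof. by rewrite -[L in _ < L]card_ord -cardsT rank_in_lt_card ?inE. Qed.

Lemma std_rank_mono rho t1 t2 :
  (std_rank rho t1 < std_rank rho t2) = (rho (shift t1) < rho (shift t2)).
Proof. by rewrite /std_rank rank_in_mono ?inE. Qed.

Lemma std_rank_inj rho : injective (std_rank rho).
Proof.
move=> t1 t2 e; apply: (rank_in_inj (f := fun u => val (rho (shift u)))) => //.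
by move=> u1 u2 _ _ /val_inj/perm_inj/shift_inj.
Qed.

Definition std_fun (rho : 'S_n) (t : 'I_L) : 'I_L := Ordinal (std_rank_lt rho t).

Lemma std_fun_inj rho : injective (std_fun rho).
Proof. by move=> t1 t2 /(congr1 val) /std_rank_inj. Qed.

Definition std (rho : 'S_n) : 'S_L := perm (@std_fun_inj rho).

Lemma pval_std rho (t : 'I_L) : pval (std rho) t = std_rank rho t.
Proof. by rewrite pvalE permE. Qed.

Lemma std_window_iso rho j k (r : nat -> nat) : j + k <= L ->
  window_iso (pval rho) (a + j) r k = window_iso (pval (std rho)) j r k.
Proof.
move=> hjk; apply: eq_forallb => u; apply: eq_forallb => v.
have hw (w : 'I_k) : j + w < L by have := ltn_ord w; lia.
have eq_pval (w : 'I_k) : pval rho (a + j + w) = rho (shift (Ordinal (hw w))).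
  by rewrite -pvalE /= addnA.
have eq_std (w : 'I_k) : pval (std rho) (j + w) = std_rank rho (Ordinal (hw w)).
  by rewrite -pval_std.
by rewrite !eq_pval !eq_std std_rank_mono.
Qed.

Lemma window_avoidsE rho k (r : 'S_k) : 0 < k ->
  window_avoids rho a (a + L) r = ~~ gcontains (oneline r) consec_dash (std rho).
Proof.
move=> hk; rewrite consec_containsE //; apply/forallP/negP.
- move=> avoid /existsP [j /andP[hj hiso]].
  have hj' : a + j < n by have := ltn_ord j; lia.
  have := avoid (Ordinal hj'); rewrite /= leq_addr -addnA leq_add2l hj /=.
  by rewrite std_window_iso // hiso.
- move=> nocont j; apply/implyP => /andP[h1 h2]; apply/negP => hiso; apply: nocont.
  have hj' : j - a < L by lia.
  apply/existsP; exists (Ordinal hj'); rewrite /= -std_window_iso; last by lia.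
  by rewrite subnKC // hiso andbT; lia.
Qed.

Variable pi : 'S_n.

Lemma std_rank_perm_on s t : perm_on window s ->
  std_rank (s * pi) t = rank_in (fun x => val (pi x)) window (pi (s (shift t))).
Proof.
move=> hs; rewrite -(im_perm_on hs) -imset_shift -imset_comp rank_in_imset.
  by rewrite /std_rank permM; apply: eq_card => u; rewrite !inE /= permM.
by move=> u1 u2 /= /perm_inj/shift_inj.
Qed.

Lemma std_mul_inj : {in perm_on window &, injective (fun s => std (s * pi))}.
Proof.
move=> s1 s2 h1 h2 /= e; apply/permP => x.
case: (boolP (x \in window)) => hx; last by rewrite (out_perm h1 hx) (out_perm h2 hx).
move: hx; rewrite -imset_shift => /imsetP [t _ ->].
have := pval_std (s1 * pi) t; rewrite e pval_std !std_rank_perm_on // => /esym.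
have in_window s : perm_on window s -> s (shift t) \in window.
  by move=> hs; rewrite (perm_closed _ hs) -imset_shift imset_f.
move/(rank_in_inj _ (in_window _ h1) (in_window _ h2)); apply.
by move=> y1 y2 _ _ /val_inj/perm_inj.
Qed.

Lemma std_mul_onto : [set std (s * pi) | s in perm_on window] = setT.
Proof.
apply/eqP; rewrite eqEcard subsetT /= cardsT card_in_imset; last exact: std_mul_inj.
by rewrite card_perm card_window card_Sn.
Qed.

Lemma card_window_avoids k (r : 'S_k) : 0 < k ->
  #|[set s | perm_on window s && window_avoids (s * pi) a (a + L) r]|
  = #|[set q : 'S_L | ~~ gcontains (oneline r) consec_dash q]|.
Proof.
move=> hk; set S := [set s | _].
have inj : {in S &, injective (fun s => std (s * pi))}.
  by move=> s1 s2; rewrite !inE => /andP[h1 _] /andP[h2 _]; apply: std_mul_inj.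
rewrite -(card_in_imset inj); apply: eq_card => q; rewrite [in RHS]inE.
apply/imsetP/idP => [[s] | hq].
  by rewrite inE => /andP[hs]; rewrite window_avoidsE // => hq ->.
have : q \in [set std (s * pi) | s in perm_on window] by rewrite std_mul_onto inE.
case/imsetP => s hs eq; exists s => //.
rewrite inE; apply/andP; split; first exact: hs.
by rewrite window_avoidsE // -eq.
Qed.

End Standardization.

Section Averaging.
Local Open Scope ring_scope.
Variables (gT : finGroupType) (R : numFieldType) (G : gT -> {set gT}).
Hypothesis G1 : forall x, 1%g \in G x.
Hypothesis GV : forall x s, s \in G x -> s^-1%g \in G x.
Hypothesis G_mul : forall x s, s \in G x -> G (s * x)%g = G x.

Lemma mem_G_mulV x s : (s \in G (s^-1 * x)%g) = (s \in G x).
Proof.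
apply/idP/idP => h; first by have := G_mul h; rewrite mulKVg => ->.
by rewrite G_mul // GV.
Qed.

Lemma sum_G_mul (h : gT -> R) :
  \sum_x \sum_(s in G x) h (s * x)%g = \sum_x h x * #|G x|%:R.
Proof.
under eq_bigr do rewrite big_mkcond /=.
rewrite exchange_big /=.
under eq_bigr => s _.
  rewrite (reindex_inj (mulgI s^-1%g)) /=.
  under eq_bigr => x _ do rewrite mem_G_mulV mulKVg.
  over.
rewrite exchange_big /=; apply: eq_bigr => x _.
by rewrite -big_mkcond /= sumr_const mulr_natr.
Qed.

Lemma sum_G_average (f : gT -> R) :
  \sum_x f x = \sum_x (\sum_(s in G x) f (s * x)%g) / #|G x|%:R.
Proof.
have cardG_neq0 x : #|G x|%:R != 0 :> R.
  by rewrite pnatr_eq0 -lt0n; apply/card_gt0P; exists 1%g.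
transitivity (\sum_x \sum_(s in G x) (f (s * x)%g / #|G (s * x)%g|%:R)).
  by rewrite (sum_G_mul (fun x => f x / #|G x|%:R)); apply: eq_bigr => x _; rewrite divfK.
apply: eq_bigr => x _; rewrite mulr_suml; apply: eq_bigr => s hs.
by rewrite G_mul.
Qed.

Lemma eq_sum_G_average (f g : gT -> R) :
  (forall x, \sum_(s in G x) f (s * x)%g = \sum_(s in G x) g (s * x)%g) ->
  \sum_x f x = \sum_x g x.
Proof.
by move=> h; rewrite sum_G_average (sum_G_average g); apply: eq_bigr => x _; rewrite h.
Qed.

End Averaging.

Definition run_window n (pi : 'S_n) (e : nat) : {set 'I_n} :=
  window n (run_start (marked_pos pi) e.+1) (e.+1 - run_start (marked_pos pi) e.+1).

Lemma mem_run_window n (pi : 'S_n) e (x : 'I_n) : run_end pi e ->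
  (x \in run_window pi e) = (run_start (marked_pos pi) e.+1 <= x < e.+1).
Proof. by move=> h; rewrite inE subnKC //; apply/leqW/run_start_le_end. Qed.

Lemma run_disjoint n (pi : 'S_n) c e x : run_end pi c -> run_end pi e -> e != c ->
  run_start (marked_pos pi) e.+1 <= x <= e ->
  ~~ (run_start (marked_pos pi) c.+1 <= x < c.+1).
Proof.
move=> /andP[_ hc] /andP[_ he] ne hx; apply/negP => hx'.
case: (ltnP e c) => hec.
- have : marked_pos pi e.+1 by apply: (@run_startP _ c.+1); lia.
  by rewrite (negbTE he).
- have hce : c < e by rewrite ltn_neqAle eq_sym ne hec.
  have : marked_pos pi c.+1 by apply: (@run_startP _ e.+1); lia.
  by rewrite (negbTE hc).
Qed.

Section RunRearrangement.
Variables (n : nat) (pi s : 'S_n) (c : nat).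
Hypotheses (hc : run_end pi c) (hs : perm_on (run_window pi c) s).

Lemma pval_mul_out x : ~~ (run_start (marked_pos pi) c.+1 <= x < c.+1) ->
  pval (s * pi)%g x = pval pi x.
Proof.
move=> hx; case: (ltnP x n) => hxn; last by rewrite !pval_out.
rewrite (pvalE (s * pi)%g (Ordinal hxn)) (pvalE pi (Ordinal hxn)) permM (out_perm hs) //.
by rewrite mem_run_window.
Qed.

Lemma marked_pos_mul : marked_pos (s * pi)%g =1 marked_pos pi.
Proof.
have hcn := run_end_lt hc.
have closed x (hx : x < n) :
    (s (Ordinal hx) \in run_window pi c) = (Ordinal hx \in run_window pi c).
  exact: perm_closed.
have closedV x (hx : x < n) :
    ((s^-1)%g (Ordinal hx) \in run_window pi c) = (Ordinal hx \in run_window pi c).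
  exact/perm_closed/perm_onV.
apply: (marked_rearrange pval_mul_out).
- move=> x hx; have hxn : x < n by lia.
  exists (s (Ordinal hxn)).
    by have := closed x hxn; rewrite !mem_run_window // => ->.
  by rewrite (pvalE (s * pi)%g (Ordinal hxn)) permM pvalE.
- move=> y hy; have hyn : y < n by lia.
  exists ((s^-1)%g (Ordinal hyn)).
    by have := closedV y hyn; rewrite !mem_run_window // => ->.
  by rewrite pvalE permM permKV (pvalE pi (Ordinal hyn)).
- by have := run_start_le_end hc; lia.
- by move=> y; apply: run_startP.
- by case/andP: hc.
Qed.

Lemma run_end_mul e : run_end (s * pi)%g e = run_end pi e.
Proof. by rewrite /run_end !marked_pos_mul. Qed.

Lemma run_start_mul e : run_start (marked_pos (s * pi)%g) e = run_start (marked_pos pi) e.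
Proof. exact/eq_run_start/marked_pos_mul. Qed.

Lemma run_avoids_mul_other e k (rho : 'S_k) : run_end pi e -> e != c ->
  run_avoids (s * pi)%g e rho = run_avoids pi e rho.
Proof.
move=> he ne; rewrite /run_avoids /window_avoids run_start_mul.
apply: eq_forallb => j; case/boolP: (_ && _) => // /andP[hj1 hj2]; rewrite !implyTb.
congr negb.
apply: eq_forallb => u; apply: eq_forallb => v.
have pval_win (w : 'I_k) : pval (s * pi)%g (j + w) = pval pi (j + w).
  by apply/pval_mul_out/(run_disjoint hc he ne); have := ltn_ord w; lia.
by rewrite !pval_win.
Qed.

End RunRearrangement.

Lemma card_run_avoids n (pi : 'S_n) c k (rho : 'S_k) : 0 < k -> run_end pi c ->
  #|[set s | perm_on (run_window pi c) s && run_avoids (s * pi)%g c rho]|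
  = #|[set q : 'S_(c.+1 - run_start (marked_pos pi) c.+1) |
       ~~ gcontains (oneline rho) consec_dash q]|.
Proof.
move=> hk hc; set a := run_start _ c.+1.
have ha : a <= c.+1 by apply/leqW/run_start_le_end.
have haL : a + (c.+1 - a) <= n by rewrite subnKC //; apply: run_end_lt hc.
rewrite -(card_window_avoids haL pi rho hk); apply: eq_card => s; rewrite !inE.
case/boolP: (perm_on _ s) => //= hs.
by rewrite /run_avoids (run_start_mul hc hs) subnKC.
Qed.

Lemma sum_nat_card (R : nzSemiRingType) (T : finType) (P b : pred T) :
  (\sum_(x in [set x | P x]) (b x)%:R = #|[set x | P x && b x]|%:R :> R)%R.
Proof.
rewrite -sum1_card natr_sum big_mkcond [RHS]big_mkcond /=.
by apply: eq_bigr => x _; rewrite !inE; case: (P x); case: (b x).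
Qed.

Section Main.
Variables (n k l : nat) (sigma : 'S_k) (tau : 'S_l).
Hypotheses (hk : 0 < k) (hl : 0 < l).
Hypothesis alpha_eq : forall L,
  #|[set q : 'S_L | ~~ gcontains (oneline sigma) consec_dash q]| =
  #|[set q : 'S_L | ~~ gcontains (oneline tau) consec_dash q]|.

Definition mixed_avoid (c : nat) (pi : 'S_n) : bool :=
  [forall e : 'I_n, run_end pi e ==>
     (if e < c then run_avoids pi e tau else run_avoids pi e sigma)].

Definition mixed_avoid_except (c : nat) (pi : 'S_n) : bool :=
  [forall e : 'I_n, ((e : nat) != c) ==> run_end pi e ==>
     (if e < c then run_avoids pi e tau else run_avoids pi e sigma)].

Lemma mixed_avoid0 pi : mixed_avoid 0 pi = ~~ gcontains (twelve_word sigma) twelve_dash pi.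
Proof. by rewrite avoid_twelveE //; apply: eq_forallb => e. Qed.

Lemma mixed_avoid_n pi : mixed_avoid n pi = ~~ gcontains (twelve_word tau) twelve_dash pi.
Proof. by rewrite avoid_twelveE //; apply: eq_forallb => e; rewrite ltn_ord. Qed.

Lemma mixed_avoid_no_run c pi : ~~ run_end pi c -> mixed_avoid c.+1 pi = mixed_avoid c pi.
Proof.
move=> hc; apply: eq_forallb => e; case/boolP: (run_end pi e) => //= he.
have ne : (e : nat) != c by apply: contraNneq hc => <-.
by rewrite ltnS leq_eqVlt (negbTE ne).
Qed.

Lemma mixed_avoid_mulE t c pi s : run_end pi c -> perm_on (run_window pi c) s ->
  (forall e, e != c -> (e < t) = (e < c)) ->
  mixed_avoid t (s * pi)%g = mixed_avoid_except c pi &&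
    (if c < t then run_avoids (s * pi)%g c tau else run_avoids (s * pi)%g c sigma).
Proof.
move=> hc hs ht; have hcn := run_end_lt hc.
have other (e : 'I_n) : run_end pi e -> (e : nat) != c ->
    (if e < t then run_avoids (s * pi)%g e tau else run_avoids (s * pi)%g e sigma) =
    (if e < c then run_avoids pi e tau else run_avoids pi e sigma).
  move=> he ne; rewrite ht // (run_avoids_mul_other hc hs tau he ne).
  by rewrite (run_avoids_mul_other hc hs sigma he ne).
apply/forallP/andP => [H | [H hsc] e].
- split; last by have := implyP (H (Ordinal hcn)); rewrite (run_end_mul hc hs) hc; apply.
  apply/forallP => e; apply/implyP => ne; apply/implyP => he.
  by have := implyP (H e); rewrite (run_end_mul hc hs) he other //; apply.
- apply/implyP; rewrite (run_end_mul hc hs) => he.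
  case: (eqVneq (e : nat) c) => [-> // | ne].
  by rewrite other //; apply: (implyP (implyP (forallP H e) ne) he).
Qed.

Definition run_perms (c : nat) (pi : 'S_n) : {set 'S_n} :=
  if run_end pi c then [set s | perm_on (run_window pi c) s] else [set 1%g].

Lemma run_perms1 c pi : 1%g \in run_perms c pi.
Proof. by rewrite /run_perms; case: run_end; rewrite inE ?perm_on1. Qed.

Lemma run_permsV c pi s : s \in run_perms c pi -> s^-1%g \in run_perms c pi.
Proof.
rewrite /run_perms; case: run_end; rewrite !inE; first exact: perm_onV.
by move/eqP ->; rewrite invg1.
Qed.

Lemma run_perms_mul c pi s : s \in run_perms c pi -> run_perms c (s * pi)%g = run_perms c pi.
Proof.
rewrite /run_perms; case hc: (run_end pi c); rewrite inE.
  by move=> hs; rewrite (run_end_mul hc hs) hc /run_window (run_start_mul hc hs).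
by move/eqP ->; rewrite mul1g hc.
Qed.

Lemma sum_mixed_avoidS c :
  (\sum_(pi : 'S_n) ((mixed_avoid c pi)%:R : rat) = \sum_pi (mixed_avoid c.+1 pi)%:R)%R.
Proof.
apply: (eq_sum_G_average (@run_perms1 c) (@run_permsV c) (@run_perms_mul c)) => pi.
rewrite /run_perms; case/boolP: (run_end pi c) => hc; last first.
  by rewrite !big_set1 mul1g mixed_avoid_no_run.
pose mixed_run k (rho : 'S_k) s := mixed_avoid_except c pi && run_avoids (s * pi)%g c rho.
rewrite (eq_bigr (fun s => (mixed_run _ sigma s)%:R)%R); last first.
  by move=> s; rewrite inE => hs; rewrite (mixed_avoid_mulE hc hs) ?ltnn.
rewrite [RHS](eq_bigr (fun s => (mixed_run _ tau s)%:R)%R); last first.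
  move=> s; rewrite inE => hs; rewrite (mixed_avoid_mulE hc hs) ?ltnSn //.
  by move=> e ne; rewrite ltnS leq_eqVlt (negbTE ne).
rewrite !sum_nat_card /mixed_run; case: (mixed_avoid_except c pi) => /=.
  by rewrite !card_run_avoids // alpha_eq.
by congr (_%:R)%R; apply: eq_card => s; rewrite !inE !andbF.
Qed.

Lemma card_avoid_twelve_eq :
  #|[set pi : 'S_n | ~~ gcontains (twelve_word sigma) twelve_dash pi]| =
  #|[set pi : 'S_n | ~~ gcontains (twelve_word tau) twelve_dash pi]|.
Proof.
have sum_card_avoid (b : 'S_n -> bool) : (#|[set pi | b pi]|%:R = \sum_pi (b pi)%:R :> rat)%R.
  by rewrite -sum1_card natr_sum big_mkcond; apply: eq_bigr => pi _; rewrite inE; case: b.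
apply/eqP; rewrite -(eqr_nat rat) !sum_card_avoid; apply/eqP.
under eq_bigr do rewrite -mixed_avoid0.
under [RHS]eq_bigr do rewrite -mixed_avoid_n.
have sum_mixed_avoid0 c :
    (\sum_pi (mixed_avoid 0 pi)%:R = \sum_pi (mixed_avoid c pi)%:R :> rat)%R.
  by elim: c => // c ->; apply: sum_mixed_avoidS.
exact: sum_mixed_avoid0.
Qed.

End Main.

Theorem mainTheorem7 (k l : nat) (sigma : 'S_k) (tau : 'S_l) :
  (0 < k)%N -> (0 < l)%N ->
  egf (oneline sigma) consec_dash = egf (oneline tau) consec_dash ->
  egf (twelve_word sigma) twelve_dash = egf (twelve_word tau) twelve_dash.
Proof.
move=> hk hl egf_eq.
have alpha_eq L : alpha (oneline sigma) consec_dash L = alpha (oneline tau) consec_dash L.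
  have fact_neq0 : (L`!%:R : rat)%R != 0%R by rewrite pnatr_eq0 -lt0n fact_gt0.
  have := congr1 (fun f => f L * L`!%:R)%R egf_eq.
  by rewrite /egf !divfK // => /eqP; rewrite eqr_nat => /eqP.
apply: functional_extensionality => m.
by rewrite /egf /alpha (card_avoid_twelve_eq m hk hl alpha_eq).
Qed.
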